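(* Let ${\bf p}\in M_n(k)$ be an AST-matrix of order $m$. Then the algebra $\mathcal O_{{\bf p},{\bf 1}}(S_{mn})$ is non-zero.
   Context: $k$ is a field of characteristic zero, $m,n\ge 2$ are integers, and $\xi\in k$ is a primitive $m$-th root of unity. For $i\in\{1,\dots,mn\}$ put $i^*=\lceil i/m\rceil\in\{1,\dots,n\}$. A matrix ${\bf p}=(p_{ij})\in M_n(k)$ is an AST-matrix if $p_{ii}=1$ and $p_{ij}p_{ji}=1$ for all $i,j$; it has order $m$ if $p_{ij}^m=1$ for all $i,j$; ${\bf 1}$ denotes the AST-matrix with all entries $1$. For $i,j,k,l\in\{1,\dots,mn\}$ put $R^{lk}_{ij}({\bf p})=\delta_{i^*k^*}\delta_{j^*l^*}\sum_{r,s=0}^{m-1}\xi^{r(i-k)+s(j-l)}p_{j^*i^*}^{rs}$. For AST-matrices ${\bf p},{\bf q}$ of order $m$, $\mathcal O_{{\bf q},{\bf p}}(S_{mn})$ is the universal algebra with generators $x_{ij}$, $1\le i,j\le mn$, and relations $x_{ij}x_{ik}=\delta_{jk}x_{ij}$, $x_{ji}x_{ki}=\delta_{jk}x_{ji}$, $\sum_{l=1}^{mn}x_{il}=1=\sum_{l=1}^{mn}x_{li}$ for $1\le i,j,k\le mn$, and $\sum_{k,l}R^{lk}_{ij}({\bf p})x_{\alpha l}x_{\beta k}=\sum_{k,l}R^{\alpha\beta}_{lk}({\bf q})x_{li}x_{kj}$ for $1\le i,j,\alpha,\beta\le mn$. *)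

From HB Require Import structures.
From mathcomp Require Import all_boot all_order all_algebra.
Set Implicit Arguments. Unset Strict Implicit. Unset Printing Implicit Defensive.
Import Order.TTheory GRing.Theory Num.Theory.
Local Open Scope ring_scope.

(* Indices 1..mn of the paper are represented 0-based by 'I_(m*n);
   index i (0-based) corresponds to i+1 in the paper, and
   i^* = ceil((i+1)/m) corresponds to the 0-based index i %/ m : 'I_n. *)
Lemma star_proof (m n : nat) (i : 'I_(m * n)) : (i %/ m < n)%N.
Proof.
case: m i => [|m] [i hi] /=; first by [].
by rewrite ltn_divLR // mulnC.
Qed.

Definition star (m n : nat) (i : 'I_(m * n)) : 'I_n := Ordinal (star_proof i).

Definition is_AST (k : fieldType) (n : nat) (P : 'M[k]_n) : Prop :=
  forall i j, P i i = 1 /\ P i j * P j i = 1.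

Definition has_order (k : fieldType) (n m : nat) (P : 'M[k]_n) : Prop :=
  forall i j, P i j ^+ m = 1.

Definition ones_mx (k : fieldType) (n : nat) : 'M[k]_n := const_mx 1.

(* Rcoef xi P i j k l  =  R^{lk}_{ij}(P) *)
Definition Rcoef (k : fieldType) (m n : nat) (xi : k) (P : 'M[k]_n)
    (i j a b : 'I_(m * n)) : k :=
  (star i == star a)%:R * (star j == star b)%:R *
  \sum_(r < m) \sum_(s < m)
     xi ^ ((r%:Z) * (i%:Z - a%:Z) + (s%:Z) * (j%:Z - b%:Z))
     * P (star j) (star i) ^+ (r * s).

Definition O_rels (k : fieldType) (m n : nat) (xi : k) (Q P : 'M[k]_n)
    (A : algType k) (x : 'I_(m * n) -> 'I_(m * n) -> A) : Prop :=
  [/\ (forall i j l, x i j * x i l = (j == l)%:R * x i j),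
      (forall i j l, x j i * x l i = (j == l)%:R * x j i),
      (forall i, \sum_(l < m * n) x i l = 1),
      (forall i, \sum_(l < m * n) x l i = 1) &
      (forall i j al be,
         \sum_(a < m * n) \sum_(b < m * n)
            Rcoef xi P i j a b *: (x al b * x be a)
         = \sum_(a < m * n) \sum_(b < m * n)
            Rcoef xi Q b a be al *: (x b i * x a j))].

(* The universal algebra O_{Q,P}(S_{mn}) is non-zero iff some k-algebra with
   1 <> 0 contains elements satisfying its defining relations (universal
   property: a model gives a unital map O -> A; conversely O is a model). *)
Definition O_nonzero (k : fieldType) (m n : nat) (xi : k) (Q P : 'M[k]_n)
  : Prop :=
  exists (A : algType k) (x : 'I_(m * n) -> 'I_(m * n) -> A),
    O_rels xi Q P x /\ (1 : A) != 0.

From HB Require Import structures.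
From mathcomp Require Import all_boot all_order all_algebra.
From mathcomp Require Import ring zify.
Set Implicit Arguments. Unset Strict Implicit. Unset Printing Implicit Defensive.
Import Order.TTheory GRing.Theory Num.Theory.
Local Open Scope ring_scope.

(* Suppose U_1, ..., U_n are elements of a k-algebra with U_u^m = 1 and
   U_v U_u = p_vu U_u U_v.  The eigenprojections
   E_u(d) = m^-1 sum_r xi^(-rd) U_u^r of U_u are orthogonal idempotents summing
   to 1, so x_ij = [i* = j*] E_i*(i - j) is a block-diagonal magic unitary.
   Since R^lk_ij(1) = m^2 [i = k] [j = l], the left-hand side of the R-relation
   is m^2 x_(alpha j) x_(beta i), a combination of the monomials U_v^s U_u^r.
   On the right-hand side the Fourier inversion
   sum_t xi^(rt) E_u(t + c) = xi^(-rc) U_u^r produces the monomials U_u^r U_v^s,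
   and both sides agree because U_v^s U_u^r = p_vu^(rs) U_u^r U_v^s.
   Such U_u exist in a nonzero matrix algebra: on the basis indexed by the
   functions w : {1..n} -> Z/m, U_u shifts w_u and multiplies by the phase
   prod_(v < u) p_uv^(w_v). *)

Section PrimitiveRoot.
Variables (k : fieldType) (m : nat) (xi : k).
Hypothesis xi_prim : m.-primitive_root xi.

Lemma prim_root_neq0 : xi != 0.
Proof. by rewrite (prim_root_eq0 xi_prim) -lt0n (prim_order_gt0 xi_prim). Qed.

Lemma prim_expzD (a b : int) : xi ^ (a + b) = xi ^ a * xi ^ b.
Proof. exact: expfzDr prim_root_neq0. Qed.

Lemma prim_expz_eq1 (z : int) : (xi ^ z == 1) = (m %| z)%Z.
Proof.
case: z => j; first by rewrite -exprnP -(prim_order_dvd xi_prim).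
by rewrite dvdzE NegzE -exprnN invr_eq1 -(prim_order_dvd xi_prim).
Qed.

Lemma prim_expz_addm (z w : int) : xi ^ (z + w * m%:Z) = xi ^ z.
Proof.
have /eqP xiwm1 : xi ^ (w * m%:Z) == 1 by rewrite prim_expz_eq1 dvdz_mull.
by rewrite prim_expzD xiwm1 mulr1.
Qed.

Lemma sum_prim_expz (z : int) :
  \sum_(t < m) xi ^ (z * t%:Z) = ((m %| z)%Z)%:R * m%:R.
Proof.
under eq_bigr do rewrite -exprz_exp -exprnP.
rewrite -prim_expz_eq1; have [xiz1 | xiz_neq1] := eqVneq (xi ^ z) 1.
  by under eq_bigr do rewrite xiz1 expr1n; rewrite mul1r sumr_const card_ord.
have xizm : (xi ^ z) ^+ m = 1.
  by apply/eqP; rewrite exprnP exprz_exp prim_expz_eq1 dvdz_mull.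
have := subrX1 (xi ^ z) m; rewrite xizm subrr mul0r => /esym/eqP.
by rewrite mulf_eq0 subr_eq0 (negPf xiz_neq1) => /eqP.
Qed.

End PrimitiveRoot.

Lemma dvdz_natB (m a b : nat) : (m %| a%:Z - b%:Z)%Z = (a %% m == b %% m)%N.
Proof. by rewrite -eqz_mod_dvd !modz_nat eqz_nat. Qed.

Lemma dvdz_natB_small (m a b : nat) :
  (a < m)%N -> (b < m)%N -> (m %| a%:Z - b%:Z)%Z = (a == b).
Proof. by move=> a_lt b_lt; rewrite dvdz_natB !modn_small. Qed.

Lemma dvdz_natM_coprime_small (m r : nat) (e : int) :
  (r < m)%N -> coprimez e m -> (m %| r%:Z * e)%Z = (r == 0%N).
Proof.
move=> r_lt co_em.
by rewrite Gauss_dvdzl 1?coprimez_sym // dvdzE /dvdn modn_small.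
Qed.

Section BlockIndex.
Variables m n : nat.

Fact block_index_subproof (u : 'I_n) (t : 'I_m) : (u * m + t < m * n)%N.
Proof. have := ltn_ord u; have := ltn_ord t; nia. Qed.

Definition block_index u t : 'I_(m * n) := Ordinal (block_index_subproof u t).

Lemma star_block_index u t : star (block_index u t) = u.
Proof.
have m_gt0 : (0 < m)%N by apply: leq_ltn_trans (leq0n t) (ltn_ord t).
by apply: val_inj; rewrite /= divnMDl // divn_small ?addn0.
Qed.

Lemma eq_ord_star_dvdz (i j : 'I_(m * n)) :
  (i == j) = (star i == star j) && (m %| i%:Z - j%:Z)%Z.
Proof.
rewrite dvdz_natB; apply/eqP/andP => [-> // | [/eqP/(congr1 val) /= eq_div]].
move=> eq_mod.
by apply: val_inj; rewrite /= (divn_eq i m) (divn_eq j m) eq_div (eqP eq_mod).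
Qed.

Lemma eq_star_dvdz (i j : 'I_(m * n)) :
  star i = star j -> (m %| i%:Z - j%:Z)%Z = (i == j).
Proof. by move=> sij; rewrite eq_ord_star_dvdz sij eqxx. Qed.

Hypothesis m_gt0 : (0 < m)%N.

Lemma sum_block_index (V : nmodType) (F : 'I_(m * n) -> V) :
  \sum_i F i = \sum_(u < n) \sum_(t < m) F (block_index u t).
Proof.
rewrite pair_bigA /= (reindex (fun p : 'I_n * 'I_m => block_index p.1 p.2)) //.
exists (fun i => (star i, Ordinal (ltn_pmod i m_gt0))) => [[u t] _ | i _] /=.
  congr pair; first exact: star_block_index.
  by apply: val_inj; rewrite /= modnMDl modn_small.
by apply: val_inj; rewrite /= -divn_eq.
Qed.

Lemma sum_star_eq (V : nmodType) (F : 'I_(m * n) -> V) (u : 'I_n) :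
  (forall i, star i != u -> F i = 0) ->
  \sum_i F i = \sum_(t < m) F (block_index u t).
Proof.
move=> F_out; rewrite sum_block_index (bigD1 u) //=.
rewrite [X in _ + X]big1 ?addr0 // => v v_neq_u.
by apply: big1 => t _; rewrite F_out // star_block_index.
Qed.

End BlockIndex.

Lemma sum_ord_shift (V : nmodType) (m : nat) (f : nat -> V) :
  f m = f 0%N -> \sum_(r < m) f r.+1 = \sum_(r < m) f r.
Proof.
case: m f => [|m] f fm; first by rewrite !big_ord0.
by rewrite big_ord_recr big_ord_recl /= fm addrC.
Qed.

Lemma sum_delta_scale (R : pzRingType) (V : lmodType R) (I : finType) (i : I)
    (c : I -> R) (F : I -> V) :
  \sum_j ((i == j)%:R * c j) *: F j = c i *: F i.
Proof.
rewrite (bigD1 i) //= eqxx mul1r big1 ?addr0 // => j j_neq_i.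
by rewrite eq_sym (negPf j_neq_i) mul0r scale0r.
Qed.

Lemma qcommute_exprn (R : comPzRingType) (A : algType R) (x y : A) (c : R) :
  y * x = c *: (x * y) ->
  forall r s, y ^+ s * x ^+ r = c ^+ (r * s) *: (x ^+ r * y ^+ s).
Proof.
move=> yx r; have yxr : y * x ^+ r = c ^+ r *: (x ^+ r * y).
  elim: r => [|r IHr]; first by rewrite !expr0 mulr1 mul1r scale1r.
  rewrite !exprSr mulrA IHr -scalerAl -(mulrA _ y) yx.
  by rewrite -scalerAr scalerA mulrA.
elim=> [|s IHs]; first by rewrite !expr0 muln0 expr0 mulr1 mul1r scale1r.
rewrite exprS -mulrA IHs -scalerAr (mulrA y) yxr -scalerAl scalerA -!mulrA.
by rewrite -exprD mulnS addnC -exprS.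
Qed.

Lemma exchange_big_pair (V : nmodType) (I J : finType)
    (F : I -> I -> J -> J -> V) :
  \sum_a \sum_b \sum_c \sum_d F a b c d = \sum_c \sum_d \sum_a \sum_b F a b c d.
Proof.
rewrite pair_bigA [RHS]pair_bigA /=.
under eq_bigr do rewrite pair_bigA /=.
under [RHS]eq_bigr do rewrite pair_bigA /=.
exact: exchange_big.
Qed.

Section EigenProjection.
Variables (k : fieldType) (m : nat) (xi : k) (A : algType k).

Definition eigenproj (T : A) (d : int) : A :=
  (m%:R)^-1 *: \sum_(r < m) xi ^ (- (r%:Z * d)) *: T ^+ r.

Lemma eigenproj_mul2 (T T' : A) (d d' : int) :
  eigenproj T d * eigenproj T' d' = ((m%:R)^-1 * (m%:R)^-1) *:
    \sum_(r < m) \sum_(s < m)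
      (xi ^ (- (r%:Z * d)) * xi ^ (- (s%:Z * d'))) *: (T ^+ r * T' ^+ s).
Proof.
rewrite -scalerAl -scalerAr scalerA mulr_suml; congr (_ *: _).
apply: eq_bigr => r _; rewrite mulr_sumr; apply: eq_bigr => s _.
by rewrite -scalerAl -scalerAr scalerA.
Qed.

Hypothesis xi_prim : m.-primitive_root xi.
Let m_neq0 : (m%:R : k) != 0. Proof. exact: prim_root_natf_neq0 xi_prim. Qed.
Variable T : A.

Lemma sum_eigenproj (c e : int) :
  coprimez e m -> \sum_(t < m) eigenproj T (c + e * t%:Z) = 1.
Proof.
move=> co_em; rewrite /eigenproj -scaler_sumr exchange_big /=.
have coef r : \sum_(t < m) xi ^ (- (r%:Z * (c + e * t%:Z)))
    = xi ^ (- (r%:Z * c)) * ((m %| r%:Z * - e)%Z%:R * m%:R).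
  rewrite -(sum_prim_expz xi_prim) mulr_sumr; apply: eq_bigr => t _.
  by rewrite -(prim_expzD xi_prim); congr (xi ^ _); ring.
under eq_bigr do rewrite -scaler_suml coef.
have m_gt0 : (0 < m)%N by exact: prim_order_gt0 xi_prim.
rewrite (bigD1 (Ordinal m_gt0)) //= big1 ?addr0 => [|r r_neq0].
  rewrite mul0r oppr0 expr0z mul1r mul0r dvdz0 mul1r expr0.
  by rewrite scalerA mulVf ?scale1r.
rewrite dvdz_natM_coprime_small ?coprimeNz //.
suff /negPf -> : (r : nat) != 0%N by rewrite mul0r mulr0 scale0r.
by apply: contra r_neq0 => /eqP r0; apply/eqP/val_inj.
Qed.

Lemma sum_expz_eigenproj (r : 'I_m) (c c' : int) :
  \sum_(t < m) xi ^ (r%:Z * (t%:Z + c')) *: eigenproj T (t%:Z + c)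
  = xi ^ (r%:Z * (c' - c)) *: T ^+ r.
Proof.
rewrite /eigenproj.
under eq_bigr do rewrite scalerA mulrC -scalerA scaler_sumr.
rewrite -scaler_sumr exchange_big /=.
have coef (s : 'I_m) : \sum_(t < m) xi ^ (r%:Z * (t%:Z + c'))
      * xi ^ (- (s%:Z * (t%:Z + c)))
    = (r == s)%:R * (xi ^ (r%:Z * (c' - c)) * m%:R).
  transitivity (xi ^ (r%:Z * c' - s%:Z * c) * ((m %| r%:Z - s%:Z)%Z%:R * m%:R)).
    rewrite -(sum_prim_expz xi_prim) mulr_sumr; apply: eq_bigr => t _.
    by rewrite -!(prim_expzD xi_prim); congr (xi ^ _); ring.
  rewrite dvdz_natB_small // val_eqE.
  have [<- | _] := eqVneq r s; last by rewrite !mul0r mulr0.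
  by rewrite !mul1r; congr (xi ^ _ * _); ring.
under eq_bigr do (under eq_bigr do rewrite scalerA; rewrite -scaler_suml coef).
by rewrite sum_delta_scale scalerA mulrCA mulVf // mulr1.
Qed.

Hypothesis T_exprm : T ^+ m = 1.

Lemma mul_eigenproj d : T * eigenproj T d = xi ^ d *: eigenproj T d.
Proof.
rewrite /eigenproj -scalerAr scalerA mulrC -scalerA; congr (_ *: _).
rewrite mulr_sumr scaler_sumr.
under eq_bigr do rewrite -scalerAr -exprS.
under [RHS]eq_bigr do rewrite scalerA -(prim_expzD xi_prim).
rewrite -(sum_ord_shift (f := fun r => xi ^ (d - r%:Z * d) *: T ^+ r)).
  by apply: eq_bigr => r _; congr (xi ^ _ *: _); rewrite intS; ring.
rewrite T_exprm mul0r subr0 -(prim_expz_addm xi_prim d (- d)).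
by congr (xi ^ _ *: _); ring.
Qed.

Lemma exprn_mul_eigenproj s d :
  T ^+ s * eigenproj T d = xi ^ (s%:Z * d) *: eigenproj T d.
Proof.
elim: s => [|s IHs]; first by rewrite expr0 mul1r mul0r expr0z scale1r.
rewrite exprSr -mulrA mul_eigenproj -scalerAr IHs scalerA -(prim_expzD xi_prim).
by rewrite intS mulrDl mul1r addrC.
Qed.

Lemma eigenproj_mul d d' :
  eigenproj T d * eigenproj T d' = ((m %| d' - d)%Z)%:R *: eigenproj T d'.
Proof.
rewrite {1}/eigenproj -scalerAl mulr_suml.
under eq_bigr do
  rewrite -scalerAl exprn_mul_eigenproj scalerA -(prim_expzD xi_prim).
rewrite -scaler_suml scalerA; congr (_ *: _).
transitivity ((m%:R)^-1 * \sum_(r < m) xi ^ ((d' - d) * r%:Z)).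
  by congr (_ * _); apply: eq_bigr => r _; congr (xi ^ _); ring.
by rewrite (sum_prim_expz xi_prim) mulrCA mulVf // mulr1.
Qed.

End EigenProjection.

Lemma Rcoef_eq0 (k : fieldType) (m n : nat) (xi : k) (Q : 'M[k]_n)
    (i j a b : 'I_(m * n)) :
  (star i != star a) || (star j != star b) -> Rcoef xi Q i j a b = 0.
Proof. by case/orP => /negPf neq; rewrite /Rcoef neq ?mulr0 !mul0r. Qed.

Section RcoefOnes.
Variables (k : fieldType) (m n : nat) (xi : k).
Hypothesis xi_prim : m.-primitive_root xi.

Lemma Rcoef_ones (i j a b : 'I_(m * n)) :
  Rcoef xi (ones_mx k n) i j a b = (i == a)%:R * (j == b)%:R * (m * m)%:R.
Proof.
rewrite /Rcoef.
under eq_bigr do under eq_bigr do rewrite mxE expr1n mulr1 (prim_expzD xi_prim).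
have sum_xi (z : int) : \sum_(r < m) xi ^ (r%:Z * z) = (m %| z)%Z%:R * m%:R.
  by rewrite -(sum_prim_expz xi_prim); apply: eq_bigr => r _; rewrite mulrC.
rewrite -big_distrlr /= !sum_xi !eq_ord_star_dvdz -!mulnb !natrM; ring.
Qed.

Lemma sum_Rcoef_ones (V : lmodType k) (F : 'I_(m * n) -> 'I_(m * n) -> V)
    (i j : 'I_(m * n)) :
  \sum_a \sum_b Rcoef xi (ones_mx k n) i j a b *: F a b = (m * m)%:R *: F i j.
Proof.
under eq_bigr do under eq_bigr do rewrite Rcoef_ones mulrAC mulrC.
under eq_bigr do rewrite sum_delta_scale.
exact: sum_delta_scale.
Qed.

End RcoefOnes.

Section MagicUnitary.
Variables (k : fieldType) (m n : nat) (xi : k) (P : 'M[k]_n).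
Hypothesis xi_prim : m.-primitive_root xi.
Variables (A : algType k) (U : 'I_n -> A).
Hypothesis U_exprm : forall u, U u ^+ m = 1.
Hypothesis U_comm : forall u v, U v * U u = P v u *: (U u * U v).

Let m_gt0 : (0 < m)%N. Proof. exact: prim_order_gt0 xi_prim. Qed.
Local Notation E u := (eigenproj m xi (U u)).
Local Notation blk := (@block_index m n).

Definition magic (i j : 'I_(m * n)) : A :=
  (star i == star j)%:R *: E (star i) (i%:Z - j%:Z).

Lemma magic_eq0 i j : star i != star j -> magic i j = 0.
Proof. by move=> /negPf sij; rewrite /magic sij scale0r. Qed.

Lemma magic_star i j : star i = star j -> magic i j = E (star i) (i%:Z - j%:Z).
Proof. by move=> sij; rewrite /magic sij eqxx scale1r. Qed.

Lemma magic_row_orth i j l : magic i j * magic i l = (j == l)%:R * magic i j.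
Proof.
have [sij | /magic_eq0 ->] := eqVneq (star i) (star j); last first.
  by rewrite mul0r mulr0.
have [sil | nsil] := eqVneq (star i) (star l); last first.
  rewrite (magic_eq0 nsil) mulr0.
  have [jl | _] := eqVneq j l; last by rewrite mul0r.
  by move: nsil; rewrite -jl sij eqxx.
rewrite !magic_star // eigenproj_mul //.
rewrite (_ : _ - _ = j%:Z - l%:Z); last by ring.
rewrite eq_star_dvdz -?sij -?sil //.
by have [-> | _] := eqVneq j l; rewrite ?scale1r ?mul1r ?scale0r ?mul0r.
Qed.

Lemma magic_col_orth i j l : magic j i * magic l i = (j == l)%:R * magic j i.
Proof.
have [sji | /magic_eq0 ->] := eqVneq (star j) (star i); last first.
  by rewrite mul0r mulr0.
have [sli | nsli] := eqVneq (star l) (star i); last first.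
  rewrite (magic_eq0 nsli) mulr0.
  have [jl | _] := eqVneq j l; last by rewrite mul0r.
  by move: nsli; rewrite -jl sji eqxx.
rewrite !magic_star // sli -sji eigenproj_mul //.
rewrite (_ : _ - _ = l%:Z - j%:Z); last by ring.
rewrite eq_star_dvdz ?sji ?sli // eq_sym.
by have [-> | _] := eqVneq j l; rewrite ?scale1r ?mul1r ?scale0r ?mul0r.
Qed.

Lemma magic_row_sum i : \sum_l magic i l = 1.
Proof.
rewrite (sum_star_eq m_gt0 (u := star i)) => [|l]; last first.
  by rewrite eq_sym => /magic_eq0.
under eq_bigr do rewrite magic_star ?star_block_index //.
rewrite -(sum_eigenproj xi_prim (U (star i))
            (i%:Z - (star i * m)%N%:Z) (e := -1)).
  by apply: eq_bigr => t _; congr (eigenproj _ _ _ _); rewrite PoszD; ring.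
by rewrite coprimeNz /coprimez gcd1z.
Qed.

Lemma magic_col_sum i : \sum_l magic l i = 1.
Proof.
rewrite (sum_star_eq m_gt0 (u := star i)) => [|l /magic_eq0 //].
under eq_bigr do rewrite magic_star ?star_block_index //.
rewrite -(sum_eigenproj xi_prim (U (star i))
            ((star i * m)%N%:Z - i%:Z) (e := 1)).
  by apply: eq_bigr => t _; congr (eigenproj _ _ _ _); rewrite PoszD; ring.
by rewrite /coprimez gcd1z.
Qed.

Definition Rrel_value (i j al be : 'I_(m * n)) : A :=
  \sum_(r < m) \sum_(s < m)
    (P (star j) (star i) ^+ (r * s)
       * xi ^ (r%:Z * (i%:Z - be%:Z) + s%:Z * (j%:Z - al%:Z)))
    *: (U (star i) ^+ r * U (star j) ^+ s).

Lemma magic_Rrel_lhs i j al be : star be = star i -> star al = star j ->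
  (m * m)%:R *: (magic al j * magic be i) = Rrel_value i j al be.
Proof.
move=> sbi saj; rewrite !magic_star // saj sbi eigenproj_mul2 scalerA natrM.
rewrite mulrACA mulfV ?mulr1 ?scale1r ?(prim_root_natf_neq0 xi_prim) //.
rewrite exchange_big; apply: eq_bigr => r _; apply: eq_bigr => s _.
rewrite (qcommute_exprn (U_comm _ _)) scalerA -(prim_expzD xi_prim) mulrC.
by congr (_ * xi ^ _ *: _); ring.
Qed.

Lemma sum_block_eigenproj u (r : 'I_m) (i be : 'I_(m * n)) :
  \sum_(t < m) xi ^ (r%:Z * ((blk u t)%:Z - be%:Z)) *: E u ((blk u t)%:Z - i%:Z)
  = xi ^ (r%:Z * (i%:Z - be%:Z)) *: U u ^+ r.
Proof.
have blkE t (c : 'I_(m * n)) :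
    (blk u t)%:Z - c%:Z = t%:Z + ((u * m)%N%:Z - c%:Z).
  by rewrite /= PoszD; ring.
under eq_bigr do rewrite !blkE.
by rewrite sum_expz_eigenproj //; congr (xi ^ _ *: _); ring.
Qed.

Lemma magic_Rrel_rhs i j al be : star be = star i -> star al = star j ->
  \sum_a \sum_b Rcoef xi P b a be al *: (magic b i * magic a j)
  = Rrel_value i j al be.
Proof.
move=> sbi saj.
have out_i a b : star b != star i ->
    Rcoef xi P b a be al *: (magic b i * magic a j) = 0.
  by move=> /magic_eq0 ->; rewrite mul0r scaler0.
under eq_bigr => a _ do rewrite (sum_star_eq m_gt0 (out_i a)).
rewrite (sum_star_eq m_gt0 (u := star j)) => [|a /magic_eq0 maj]; last first.
  by apply: big1 => t _; rewrite maj mulr0 scaler0.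
under eq_bigr do under eq_bigr do
  rewrite /Rcoef !star_block_index sbi saj !eqxx !mul1r
          !magic_star ?star_block_index // scaler_suml.
under eq_bigr do under eq_bigr do under eq_bigr do rewrite scaler_suml.
rewrite exchange_big_pair; apply: eq_bigr => r _; apply: eq_bigr => s _.
transitivity (P (star j) (star i) ^+ (r * s) *:
  ((xi ^ (r%:Z * (i%:Z - be%:Z)) *: U (star i) ^+ r)
   * (xi ^ (s%:Z * (j%:Z - al%:Z)) *: U (star j) ^+ s))); last first.
  by rewrite -scalerAl -scalerAr !scalerA (prim_expzD xi_prim) mulrA.
rewrite -!sum_block_eigenproj mulr_suml scaler_sumr exchange_big.
apply: eq_bigr => ta _; rewrite mulr_sumr scaler_sumr; apply: eq_bigr => tb _.
rewrite -[in RHS]scalerAl -[in RHS]scalerAr !scalerA (prim_expzD xi_prim).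
congr (_ *: _); ring.
Qed.

Lemma magic_Rrel_rhs_eq0 i j al be :
  (star be != star i) || (star al != star j) ->
  \sum_a \sum_b Rcoef xi P b a be al *: (magic b i * magic a j) = 0.
Proof.
move=> nstar; apply: big1 => a _; apply: big1 => b _.
have [sbb | nsbb] := eqVneq (star b) (star be); last first.
  by rewrite Rcoef_eq0 ?nsbb // scale0r.
have [saa | nsaa] := eqVneq (star a) (star al); last first.
  by rewrite Rcoef_eq0 ?nsaa ?orbT // scale0r.
case/orP: nstar => [nbi | naj].
  by rewrite (@magic_eq0 b) ?sbb // mul0r scaler0.
by rewrite (@magic_eq0 a) ?saa // mulr0 scaler0.
Qed.

Lemma magic_Rrel i j al be :
  \sum_a \sum_b Rcoef xi (ones_mx k n) i j a b *: (magic al b * magic be a)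
  = \sum_a \sum_b Rcoef xi P b a be al *: (magic b i * magic a j).
Proof.
rewrite (sum_Rcoef_ones xi_prim (fun a b => magic al b * magic be a)).
have [sbi | nsbi] := eqVneq (star be) (star i); last first.
  by rewrite magic_Rrel_rhs_eq0 ?nsbi // (magic_eq0 nsbi) mulr0 scaler0.
have [saj | nsaj] := eqVneq (star al) (star j); last first.
  by rewrite magic_Rrel_rhs_eq0 ?nsaj ?orbT // (magic_eq0 nsaj) mul0r scaler0.
by rewrite magic_Rrel_lhs // magic_Rrel_rhs.
Qed.

Lemma O_rels_magic : O_rels xi P (ones_mx k n) magic.
Proof.
split; [exact: magic_row_orth | exact: magic_col_orth | exact: magic_row_sum
       | exact: magic_col_sum | exact: magic_Rrel].
Qed.

End MagicUnitary.

Section MonomialMatrix.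
Variables (R : comPzRingType) (I : finType) (N : nat).
Hypothesis cardI : #|I| = N.+1.

Definition fin_of_ord (a : 'I_N.+1) : I := enum_val (cast_ord (esym cardI) a).
Definition ord_of_fin (x : I) : 'I_N.+1 := cast_ord cardI (enum_rank x).

Lemma ord_of_finK : cancel ord_of_fin fin_of_ord.
Proof. by move=> x; rewrite /fin_of_ord /ord_of_fin cast_ordK enum_rankK. Qed.

Lemma fin_of_ordK : cancel fin_of_ord ord_of_fin.
Proof. by move=> a; rewrite /fin_of_ord /ord_of_fin enum_valK cast_ordKV. Qed.

Definition monomx (f : I -> I) (c : I -> R) : 'M[R]_N.+1 :=
  \matrix_(a, b) ((fin_of_ord a == f (fin_of_ord b))%:R * c (fin_of_ord b)).

Lemma eq_monomx f f' c c' : f =1 f' -> c =1 c' -> monomx f c = monomx f' c'.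
Proof. by move=> ff' cc'; apply/matrixP => a b; rewrite !mxE ff' cc'. Qed.

Lemma monomx1 : monomx id (fun=> 1) = 1.
Proof.
by apply/matrixP => a b; rewrite !mxE mulr1 /= (can_eq fin_of_ordK).
Qed.

Lemma mul_monomx f c g d :
  monomx f c * monomx g d = monomx (f \o g) (fun x => c (g x) * d x).
Proof.
apply/matrixP => a b; rewrite -mulmxE !mxE.
rewrite (bigD1 (ord_of_fin (g (fin_of_ord b)))) //=.
rewrite !mxE ord_of_finK eqxx mul1r mulrA big1 ?addr0 // => a' a'_neq.
rewrite !mxE; have [ga' | _] := eqVneq (fin_of_ord a') (g (fin_of_ord b)).
  by move: a'_neq; rewrite -ga' fin_of_ordK eqxx.
by rewrite mul0r mulr0.
Qed.

Lemma scale_monomx a f c : a *: monomx f c = monomx f (fun x => a * c x).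
Proof. by apply/matrixP => x y; rewrite !mxE mulrCA. Qed.

Lemma monomx_exprn f c s :
  monomx f c ^+ s = monomx (iter s f) (fun x => \prod_(q < s) c (iter q f x)).
Proof.
elim: s => [|s IHs].
  by rewrite expr0 -monomx1; apply: eq_monomx => // x; rewrite big_ord0.
rewrite exprS IHs mul_monomx; apply: eq_monomx => // x.
by rewrite big_ord_recr /= mulrC.
Qed.

End MonomialMatrix.

Lemma iter_ordS (m q : nat) (i : 'I_m) :
  val (iter q (@ordS m) i) = ((i + q) %% m)%N.
Proof.
elim: q => [|q IHq] /=; first by rewrite addn0 modn_small.
by rewrite IHq -addn1 modnDml -addnA addn1.
Qed.

Section QuantumTorusRep.
Variables (k : fieldType) (m n : nat) (P : 'M[k]_n).
Local Notation Zmn := {ffun 'I_n -> 'I_m}.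
Hypothesis P_AST : is_AST P.
Hypothesis P_order : has_order m P.
Variable N : nat.
Hypothesis cardI : #|Zmn| = N.+1.

Definition shift_at (u : 'I_n) (w : Zmn) : Zmn :=
  [ffun v => if v == u then ordS (w v) else w v].

Definition cocycle (u : 'I_n) (w : Zmn) : k :=
  \prod_(v < n | (v < u)%N) P u v ^+ w v.

Definition qtorus_gen (u : 'I_n) : 'M[k]_N.+1 :=
  monomx cardI (shift_at u) (cocycle u).

Lemma iter_shift_at u q w :
  iter q (shift_at u) w
  = [ffun v => if v == u then iter q (@ordS m) (w v) else w v].
Proof.
elim: q => [|q IHq] /=.
  by apply/ffunP => v; rewrite ffunE; case: eqP => // ->.
by apply/ffunP => v; rewrite !ffunE IHq ffunE; case: eqP.
Qed.

Lemma cocycle_shift_at u u' w :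
  cocycle u (shift_at u' w) = (if (u' < u)%N then P u u' else 1) * cocycle u w.
Proof.
rewrite /cocycle; case: ifP => u'_lt_u.
  rewrite (bigD1 u') //= [in RHS](bigD1 u') //= mulrA; congr (_ * _).
    by rewrite ffunE eqxx /= -exprS; apply: expr_mod; exact: P_order.
  by apply: eq_bigr => v /andP [_ /negPf v_neq]; rewrite ffunE v_neq.
rewrite mul1r; apply: eq_bigr => v v_lt_u; rewrite ffunE.
by case: eqP => // v_eq; move: v_lt_u u'_lt_u; rewrite v_eq => ->.
Qed.

Lemma qtorus_gen_exprm u : qtorus_gen u ^+ m = 1.
Proof.
rewrite /qtorus_gen monomx_exprn -(monomx1 k cardI); apply: eq_monomx => w.
  rewrite iter_shift_at; apply/ffunP => v; rewrite ffunE.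
  by case: eqP => // _; apply: val_inj; rewrite iter_ordS modnDr modn_small.
rewrite (eq_bigr (fun=> cocycle u w)) => [|q _]; last first.
  rewrite /cocycle; apply: eq_bigr => v v_lt_u.
  by rewrite iter_shift_at ffunE; case: eqP v_lt_u => // ->; rewrite ltnn.
rewrite prodr_const card_ord /cocycle -prodrXl; apply: big1 => v _.
by rewrite -exprM mulnC exprM P_order expr1n.
Qed.

Lemma shift_atC u v : shift_at v \o shift_at u =1 shift_at u \o shift_at v.
Proof.
move=> w; apply/ffunP => x; rewrite /= !ffunE.
by case: (x == u); case: (x == v).
Qed.

Lemma qtorus_gen_comm u v :
  qtorus_gen v * qtorus_gen u = P v u *: (qtorus_gen u * qtorus_gen v).
Proof.
rewrite /qtorus_gen !mul_monomx scale_monomx.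
apply: eq_monomx => [|w /=]; first exact: shift_atC.
rewrite !cocycle_shift_at; case: ltngtP => [u_lt_v | v_lt_u | /val_inj ->].
- by rewrite mul1r; ring.
- by rewrite mul1r !mulrA (proj2 (P_AST v u)) mul1r mulrC.
- by rewrite (proj1 (P_AST v v)) !mul1r mulrC.
Qed.

End QuantumTorusRep.

Theorem lemma2p3 (k : fieldType) (m n : nat) (xi : k) (P : 'M[k]_n) :
  [pchar k] =i pred0 ->
  (2 <= m)%N -> (2 <= n)%N ->
  primitive_root_of_unity m xi ->
  is_AST P -> has_order m P ->
  O_nonzero m xi P (ones_mx k n).
Proof.
move=> _ _ _ xi_prim P_AST P_order.
have [N cardI] : exists N, #|{ffun 'I_n -> 'I_m}| = N.+1.
  have m_gt0 := prim_order_gt0 xi_prim.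
  exists #|{ffun 'I_n -> 'I_m}|.-1; rewrite prednK //.
  by apply/card_gt0P; exists [ffun=> Ordinal m_gt0].
exists _, (magic xi (qtorus_gen P cardI)); split; last exact: oner_neq0.
exact (O_rels_magic xi_prim (qtorus_gen_exprm P_order cardI)
                            (qtorus_gen_comm P_AST P_order cardI)).
Qed.
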